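(* Let $n\ge2$, $\alpha\in(-n,0)$ and let $\phi$ be a Young function. (i) If $\underline\Lambda_\phi(\alpha)<\infty$, then $$\phi(xs)\le 2^{2n}\underline\Lambda_\phi(\alpha)\,\phi(2^{1-\alpha}x)\,s^{n/(1-\alpha)}\quad\forall\,0<s\le1,\ x>0.$$ (ii) If $\overline\Lambda_\phi(\alpha)<\infty$, then for every $x>0$, $\phi(xs^{-\alpha})s^{-n}\to0$ as $s\to\infty$, and $$\phi(xs)\le 2^{3n}\overline\Lambda_\phi(\alpha)\,\phi(x)\,s^{-n/\alpha}\quad\forall\,s\ge1,\ x>0.$$
   Context: A Young function is $\phi\in C([0,\infty))$, convex, with $\phi(0)=0$, $\phi(t)>0$ for $t>0$, $\lim_{t\to\infty}\phi(t)=\infty$. $\underline\Lambda_\phi(\alpha):=\sup_{x>0}\int_0^1\frac{\phi(t^{1-\alpha}x)}{\phi(x)}\frac{dt}{t^{n+1}}$, $\overline\Lambda_\phi(\alpha):=\sup_{x>0}\int_1^\infty\frac{\phi(t^{-\alpha}x)}{\phi(x)}\frac{dt}{t^{n+1}}$. *)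

From HB Require Import structures.
From mathcomp Require Import all_boot all_order all_algebra.
From mathcomp Require Import all_classical all_reals all_analysis.
Set Implicit Arguments. Unset Strict Implicit. Unset Printing Implicit Defensive.
Import Order.TTheory GRing.Theory Num.Theory.
Import numFieldNormedType.Exports.
Local Open Scope classical_set_scope.
Local Open Scope ring_scope.

(* Young function: phi is only relevant on [0, +oo); we take phi : R -> R
   and impose all conditions on [0, +oo). *)
Definition young_function (R : realType) (phi : R -> R) : Prop :=
  {within `[0%R, +oo[, continuous phi} /\
  (forall (x y l : R), 0 <= x -> 0 <= y -> 0 <= l <= 1 ->
     phi (l * x + (1 - l) * y) <= l * phi x + (1 - l) * phi y) /\
  phi 0 = 0 /\
  (forall t : R, 0 < t -> 0 < phi t) /\
  (phi @ +oo --> +oo).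

Definition Lambda_low (R : realType) (n : nat) (phi : R -> R) (alpha : R) : \bar R :=
  ereal_sup [set (\int[lebesgue_measure]_(t in `]0%R, 1%R[)
                    ((phi (t `^ (1 - alpha) * x) / phi x) / t ^+ n.+1)%:E)%E
            | x in `]0%R, +oo[].

Definition Lambda_up (R : realType) (n : nat) (phi : R -> R) (alpha : R) : \bar R :=
  ereal_sup [set (\int[lebesgue_measure]_(t in `]1%R, +oo[)
                    ((phi (t `^ (- alpha) * x) / phi x) / t ^+ n.+1)%:E)%E
            | x in `]0%R, +oo[].

From HB Require Import structures.
From mathcomp Require Import all_boot all_order all_algebra.
From mathcomp Require Import all_classical all_reals all_analysis measurable_realfun.
From mathcomp Require Import ring.
Import Order.TTheory GRing.Theory Num.Theory.
Import numFieldNormedType.Exports.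
Local Open Scope classical_set_scope.
Local Open Scope ring_scope.

(* Write q_x(t) = phi(t^e x) / (phi(x) t^(n+1)) ([young_quotient]) for the integrand of
   Lambda, with e = 1 - alpha or e = - alpha.  Since phi and t |-> t^e are nondecreasing,
   q_x >= phi(r^e x) / (phi(x) (2r)^(n+1)) on ]r, 2r[, so any domain D containing ]r, 2r[
   gives r phi(r^e x) / (phi(x) (2r)^(n+1)) <= int_D q_x <= Lambda, i.e.
   phi(r^e x) <= 2^(n+1) Lambda phi(x) r^n.
   Part (i) takes D = ]0, 1[, x := 2^(1-alpha) x and r = s^(1/(1-alpha)) / 2; the bound of
   part (ii) takes D = ]1, +oo[ and r = s^(-1/alpha).  For the limit in (ii), apply the same
   estimate to D = ]1, +oo[ /\ ]k, +oo[, whose integrals tend to 0 by dominated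
   convergence. *)

Section lebesgue_integral_bounds.
Context {R : realType}.
Local Notation mu := (@lebesgue_measure R).

Lemma integral_itv_lbound (D : set R) (f : R -> R) (a b m : R) :
  measurable D -> measurable_fun D f -> (forall t, D t -> 0 <= f t) ->
  a < b -> `]a, b[ `<=` D -> 0 <= m -> (forall t, a < t < b -> m <= f t) ->
  ((m * (b - a))%:E <= \int[mu]_(t in D) (f t)%:E)%E.
Proof.
move=> mD mf f0 ab abD m0 mf_le.
have mfE : measurable_fun D (fun t => (f t)%:E) by exact/measurable_EFinP.
apply: (@le_trans _ _ (\int[mu]_(t in `]a, b[) (f t)%:E)%E); last first.
  by apply: ge0_subset_integral => // t Dt; rewrite lee_fin f0.
have -> : ((m * (b - a))%:E = \int[mu]_(t in `]a, b[) (cst m%:E t))%E.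
  by rewrite integral_cst //= lebesgue_measure_itv /= lte_fin ab -EFinD -EFinM.
by apply: ge0_le_integral => //; exact: measurable_funS mfE.
Qed.

Lemma ge0_integral_tail_cvg0 (D : set R) (f : R -> R) :
  measurable D -> measurable_fun D f -> (forall t, D t -> 0 <= f t) ->
  (\int[mu]_(t in D) (f t)%:E < +oo)%E ->
  (\int[mu]_(t in D `&` `]k%:R, +oo[) (f t)%:E)%E @[k --> \oo] --> 0%E.
Proof.
move=> mD mf f0 fint.
have mfE : measurable_fun D (fun t => (f t)%:E) by exact/measurable_EFinP.
have fE0 t : D t -> (0 <= (f t)%:E)%E by move=> /f0; rewrite lee_fin.
under eq_cvg do rewrite integral_mkcondr.
have f_int : mu.-integrable D (EFin \o f).
  apply/integrableP; split => //; apply: le_lt_trans fint; rewrite le_eqVlt.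
  by apply/orP; left; apply/eqP/eq_integral => t /[!inE] Dt; rewrite gee0_abs ?fE0.
have mfk k : measurable_fun D ((EFin \o f) \_ `]k%:R, +oo[).
  apply/(measurable_restrict _ (measurable_itv _) mD).
  exact: measurable_funS mfE.
have fk_cvg0 : {ae mu, forall t, D t ->
    ((EFin \o f) \_ `]k%:R, +oo[) t @[k --> \oo] --> cst 0%E t}.
  apply: aeW => t _; apply: cvg_near_cst; exists (Num.truncn t).+1 => // k /= tk.
  rewrite patchE memNset // /= in_itv /= andbT; apply/negP; rewrite -leNgt.
  by rewrite (le_trans (ltW (truncnS_gt t))) // ler_nat.
have fk_le : {ae mu, forall t k, D t ->
    (`|((EFin \o f) \_ `]k%:R, +oo[) t| <= (EFin \o f) t)%E}.
  apply: aeW => t k Dt; rewrite patchE.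
  by case: ifPn => _; rewrite ?abse0 ?gee0_abs ?fE0.
have [_ _] := @dominated_convergence _ _ _ mu D mD _ (cst 0%E) _
  mfk (measurable_cst _) fk_cvg0 f_int fk_le.
by rewrite integral0.
Qed.

End lebesgue_integral_bounds.

Lemma powR_continuous {R : realType} (e t : R) : 0 < t ->
  {for t, continuous (fun s : R => s `^ e)}.
Proof.
move=> t0; apply: differentiable_continuous; apply/derivable1_diffP.
by apply: derivable_powR; rewrite in_itv /= andbT.
Qed.

Lemma ereal_sup_ubound_fine {R : realType} (S : set \bar R) (v : \bar R) :
  S v -> (0 <= v)%E -> (ereal_sup S < +oo)%E -> (v <= (fine (ereal_sup S))%:E)%E.
Proof.
move=> Sv v0 S_fin; have vS := ereal_sup_ubound Sv.
by rewrite fineK // ge0_fin_numE // (le_trans v0 vS).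
Qed.

Lemma powR_invrK {R : realType} (s b : R) : 0 <= s -> b != 0 -> (s `^ b^-1) `^ b = s.
Proof. by move=> s0 b0; rewrite -powRrM mulVf // powRr1. Qed.

Lemma powR_invr_exprn {R : realType} (s b : R) n : (s `^ b^-1) ^+ n = s `^ (n%:R / b).
Proof. by rewrite -powR_mulrn ?powR_ge0 // -powRrM mulrC. Qed.

Section young_function.
Context {R : realType} (phi : R -> R).
Hypothesis phiY : young_function phi.

Lemma young_gt0 t : 0 < t -> 0 < phi t.
Proof. by case: phiY => _ [_ [_ [phi_gt0 _]]]; exact: phi_gt0. Qed.

Lemma young_ge0 t : 0 <= t -> 0 <= phi t.
Proof.
rewrite le_eqVlt => /predU1P[<-|/young_gt0/ltW//].
by case: phiY => _ [_ [-> _]].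
Qed.

Lemma young_le a b : 0 <= a -> a <= b -> phi a <= phi b.
Proof.
move=> a0 ab; have [b0|b_neq0] := eqVneq b 0.
  by have -> : a = b by apply/eqP; rewrite eq_le ab b0 a0.
have {b_neq0}b_gt0 : 0 < b by rewrite lt_neqAle eq_sym b_neq0 (le_trans a0 ab).
have ab01 : 0 <= a / b <= 1.
  by rewrite ler_pdivrMr // mul1r ab andbT divr_ge0 // ltW.
case: phiY => _ [convex [phi0 _]].
have := convex b 0 (a / b) (ltW b_gt0) (lexx _) ab01.
rewrite !mulr0 addr0 phi0 mulr0 addr0 divfK ?gt_eqF // => /le_trans; apply.
by apply: ler_piMl; [exact/young_ge0/ltW | case/andP: ab01].
Qed.

Lemma young_continuous t : 0 < t -> {for t, continuous phi}.
Proof.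
move=> t0; have [phi_cont _] := (continuous_within_itvcyP 0 phi).1 (proj1 phiY).
by apply: phi_cont; rewrite in_itv /= andbT.
Qed.

Definition young_quotient (n : nat) (e x t : R) : R :=
  phi (t `^ e * x) / phi x / t ^+ n.+1.

Lemma young_quotient_ge0 n e x t : 0 <= x -> 0 <= t -> 0 <= young_quotient n e x t.
Proof.
move=> x0 t0; apply: divr_ge0; last exact: exprn_ge0.
by apply: divr_ge0; apply: young_ge0 => //; exact: mulr_ge0 (powR_ge0 _ _) x0.
Qed.

Lemma young_quotient_integral_ge0 n e x (D : set R) : 0 <= x -> D `<=` `]0, +oo[ ->
  (0 <= \int[lebesgue_measure]_(t in D) (young_quotient n e x t)%:E)%E.
Proof.
move=> x0 D0; apply: integral_ge0 => t /D0; rewrite /= in_itv /= andbT => t0.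
by rewrite lee_fin young_quotient_ge0 // ltW.
Qed.

Lemma young_quotient_continuous n e x t : 0 < x -> 0 < t ->
  {for t, continuous (young_quotient n e x)}.
Proof.
move=> x0 t0; apply: continuousM; last first.
  by apply: continuousV; [rewrite expf_neq0 ?gt_eqF | exact: exprn_continuous].
apply: continuousM; last exact: cst_continuous.
apply: (@continuous_comp _ _ _ (fun s => s `^ e * x) phi).
  by apply: continuousM; [exact: powR_continuous | exact: cst_continuous].
by apply: young_continuous; rewrite mulr_gt0 ?powR_gt0.
Qed.

Lemma young_quotient_measurable n (e x : R) : 0 < x ->
  measurable_fun (`]0, +oo[ : set R) (young_quotient n e x).
Proof.
move=> x0; apply: open_continuous_measurable_fun; first exact: interval_open.
move=> t; rewrite inE /= in_itv /= andbT => t0.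
exact: young_quotient_continuous.
Qed.

Lemma young_quotient_lbound n e x r t : 0 <= e -> 0 < x -> 0 < r -> r < t < 2 * r ->
  phi (r `^ e * x) / phi x / (2 * r) ^+ n.+1 <= young_quotient n e x t.
Proof.
move=> e0 x0 r0 /andP[rt t2r]; have t0 := lt_trans r0 rt.
have phix0 : 0 < phi x by exact: young_gt0.
apply: ler_pM.
- by rewrite divr_ge0 ?young_ge0 ?mulr_ge0 ?powR_ge0 ?ltW.
- by rewrite invr_ge0 exprn_ge0 // mulr_ge0 // ltW.
- apply: ler_wpM2r; first by rewrite invr_ge0 ltW.
  apply: young_le; first by rewrite mulr_ge0 ?powR_ge0 ?ltW.
  by rewrite ler_pM2r //; apply: ge0_ler_powR; rewrite // ?nnegrE ltW.
- rewrite lef_pV2 ?posrE ?exprn_gt0 ?mulr_gt0 //.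
  by apply: lerXn2r; rewrite ?nnegrE ?mulr_ge0 ?ltW.
Qed.

Lemma young_quotient_integral_bound n e x r (D : set R) (L : R) :
  0 <= e -> 0 < x -> 0 < r -> measurable D -> D `<=` `]0, +oo[ ->
  `]r, 2 * r[ `<=` D ->
  (\int[lebesgue_measure]_(t in D) (young_quotient n e x t)%:E <= L%:E)%E ->
  phi (r `^ e * x) <= 2 ^+ n.+1 * L * phi x * r ^+ n.
Proof.
move=> e0 x0 r0 mD D0 rD intL.
have phix0 : 0 < phi x by exact: young_gt0.
set m := phi (r `^ e * x) / phi x / (2 * r) ^+ n.+1.
have m0 : 0 <= m.
  apply: divr_ge0; last by apply: exprn_ge0; rewrite mulr_ge0 // ltW.
  by apply: divr_ge0; [apply: young_ge0; rewrite mulr_ge0 ?powR_ge0 // ltW | exact: ltW].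
have mr_le : m * r <= L.
  rewrite -lee_fin; apply: le_trans intL.
  have {1}-> : r = 2 * r - r by ring.
  apply: integral_itv_lbound => //.
  - apply: (measurable_funS _ D0) => //; exact: young_quotient_measurable.
  - move=> t /D0; rewrite /= in_itv /= andbT => t0.
    by apply: young_quotient_ge0; exact: ltW.
  - by rewrite ltr_pMl // ltr1n.
  - by move=> t; exact: young_quotient_lbound.
have -> : phi (r `^ e * x) = m * r * (2 ^+ n.+1 * phi x * r ^+ n).
  by rewrite /m exprMn !exprS; field; rewrite !expf_neq0 ?gt_eqF.
have -> : 2 ^+ n.+1 * L * phi x * r ^+ n = L * (2 ^+ n.+1 * phi x * r ^+ n) by ring.
by rewrite ler_wpM2r // !mulr_ge0 ?exprn_ge0 ?ltW.
Qed.

Lemma young_quotient_tail_cvg0 n (e x : R) : 0 <= e -> 0 < x ->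
  (\int[lebesgue_measure]_(t in `]1%R, +oo[) (young_quotient n e x t)%:E < +oo)%E ->
  (fun s => phi (x * s `^ e) / s ^+ n) @ +oo --> 0.
Proof.
move=> e0 x0 fint.
have phix0 : 0 < phi x by exact: young_gt0.
have D0 : `]1, +oo[ `<=` (`]0, +oo[ : set R).
  by move=> t; rewrite /= !in_itv /= !andbT; apply: lt_trans.
have mq : measurable_fun (`]1%R, +oo[ : set R) (young_quotient n e x).
  by apply: (measurable_funS _ D0) => //; exact: young_quotient_measurable.
have q0 t : [set` `]1%R, +oo[] t -> 0 <= young_quotient n e x t.
  by move=> /D0; rewrite /= in_itv /= andbT => t0; apply: young_quotient_ge0; exact: ltW.
have /fine_cvgP[tail_fin /cvgrPdist_lt tail_small] :=
  ge0_integral_tail_cvg0 _ _ (measurable_itv _) mq q0 fint.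
apply/cvgrPdist_lt => eps eps0.
pose C := 2 ^+ n.+1 * phi x; have C0 : 0 < C by rewrite mulr_gt0 ?exprn_gt0.
pose T k := (\int[lebesgue_measure]_(t in `]1%R, +oo[ `&` `]k%:R, +oo[)
  (young_quotient n e x t)%:E)%E.
near \oo => K.
have T_fin : T K \is a fin_num by near: K.
have T_small : `|0 - fine (T K)| < eps / C by near: K; apply: tail_small; rewrite divr_gt0.
near=> s.
have s1 : 1 <= s by near: s; apply: nbhs_pinfty_ge; exact: num_real.
have sK : K%:R <= s by near: s; apply: nbhs_pinfty_ge; exact: num_real.
have s0 : 0 < s by exact: lt_le_trans ltr01 s1.
have bound : phi (s `^ e * x) <= 2 ^+ n.+1 * fine (T K) * phi x * s ^+ n.
  apply: (@young_quotient_integral_bound n e x s (`]1%R, +oo[ `&` `]K%:R, +oo[)) => //.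
  - exact: measurableI (measurable_itv _) (measurable_itv _).
  - by move=> t [/D0].
  - move=> t; rewrite /= !in_itv /= !andbT => /andP[st _].
    by split; [exact: le_lt_trans s1 st | exact: le_lt_trans sK st].
  - by rewrite fineK.
have q_ge0 : 0 <= phi (x * s `^ e) / s ^+ n.
  apply: divr_ge0; last exact/exprn_ge0/ltW.
  by apply: young_ge0; rewrite mulr_ge0 ?powR_ge0 // ltW.
rewrite sub0r normrN ger0_norm //; apply: (@le_lt_trans _ _ (fine (T K) * C)).
  rewrite ler_pdivrMr ?exprn_gt0 // [x * _]mulrC.
  suff -> : fine (T K) * C * s ^+ n = 2 ^+ n.+1 * fine (T K) * phi x * s ^+ n by [].
  by rewrite /C; ring.
rewrite -ltr_pdivlMr //; apply: le_lt_trans T_small.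
by rewrite sub0r normrN ler_norm.
Unshelve. all: by end_near.
Qed.

Lemma Lambda_low_ubound n (alpha x : R) : 0 < x -> (Lambda_low n phi alpha < +oo)%E ->
  (\int[lebesgue_measure]_(t in `]0%R, 1%R[) (young_quotient n (1 - alpha) x t)%:E
     <= (fine (Lambda_low n phi alpha))%:E)%E.
Proof.
move=> x0 Lfin; apply: ereal_sup_ubound_fine Lfin.
  by exists x; rewrite //= in_itv /= andbT.
apply: young_quotient_integral_ge0 (ltW x0) _ => t.
by rewrite /= !in_itv /= => /andP[->].
Qed.

Lemma Lambda_up_ubound n (alpha x : R) : 0 < x -> (Lambda_up n phi alpha < +oo)%E ->
  (\int[lebesgue_measure]_(t in `]1%R, +oo[) (young_quotient n (- alpha) x t)%:E
     <= (fine (Lambda_up n phi alpha))%:E)%E.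
Proof.
move=> x0 Lfin; apply: ereal_sup_ubound_fine Lfin.
  by exists x; rewrite //= in_itv /= andbT.
apply: young_quotient_integral_ge0 (ltW x0) _ => t.
by rewrite /= !in_itv /= !andbT; apply: lt_trans.
Qed.

Lemma Lambda_low_young_bound n (alpha : R) : (0 < n)%N -> alpha < 1 ->
  (Lambda_low n phi alpha < +oo)%E ->
  forall s x : R, 0 < s -> s <= 1 -> 0 < x ->
    phi (x * s) <= 2 ^+ (2 * n) * fine (Lambda_low n phi alpha)
                   * phi (2 `^ (1 - alpha) * x) * s `^ (n%:R / (1 - alpha)).
Proof.
move=> n0 alpha1 Lfin s x s0 s1 x0.
set L := fine _; set b := 1 - alpha; set y := 2 `^ b * x.
have b0 : 0 < b by rewrite subr_gt0.
have y0 : 0 < y by rewrite mulr_gt0 ?powR_gt0.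
have intL := Lambda_low_ubound n alpha y y0 Lfin.
have L0 : 0 <= L.
  rewrite -lee_fin (le_trans _ intL) // young_quotient_integral_ge0 ?ltW // => t.
  by rewrite /= !in_itv /= => /andP[->].
set S := s `^ b^-1.
have S0 : 0 < S by rewrite powR_gt0.
have S1 : S <= 1.
  by rewrite -[leRHS](powRr0 s); apply: ger_powR; rewrite ?s0 ?s1 // invr_ge0 ltW.
have r0 : 0 < S / 2 by rewrite divr_gt0.
have sub0 : `]0%R, 1%R[ `<=` (`]0, +oo[ : set R).
  by move=> t; rewrite /= !in_itv /= => /andP[->].
have subS : `]S / 2, 2 * (S / 2)[ `<=` `]0%R, 1%R[.
  have -> : 2 * (S / 2) = S by rewrite mulrC divfK.
  move=> t; rewrite /= !in_itv /= => /andP[St tS].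
  by rewrite (lt_trans r0 St) (lt_le_trans tS S1).
have rb_y : (S / 2) `^ b * y = x * s.
  rewrite /y mulrA -powRM ?divr_ge0 ?ltW // divfK // powR_invrK ?ltW ?gt_eqF //.
  exact: mulrC.
have := young_quotient_integral_bound n b y (S / 2) `]0%R, 1%R[ L
  (ltW b0) y0 r0 (measurable_itv _) sub0 subS intL.
rewrite rb_y => /le_trans; apply.
have -> : 2 ^+ n.+1 * L * phi y * (S / 2) ^+ n = 2 * (L * phi y * S ^+ n).
  by rewrite exprMn exprVn exprS; field; rewrite expf_neq0.
rewrite /S powR_invr_exprn -!mulrA; apply: ler_wpM2r.
  by rewrite mulr_ge0 // mulr_ge0 ?powR_ge0 // young_ge0 // ltW.
by apply: ler_eXnr; rewrite ?muln_gt0 // ler1n.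
Qed.

Lemma Lambda_up_young_cvg0 n (alpha : R) : alpha <= 0 ->
  (Lambda_up n phi alpha < +oo)%E ->
  forall x : R, 0 < x -> (fun s => phi (x * s `^ (- alpha)) / s ^+ n) @ +oo --> 0.
Proof.
move=> alpha0 Lfin x x0; apply: young_quotient_tail_cvg0; rewrite ?oppr_ge0 //.
exact: le_lt_trans (Lambda_up_ubound n alpha x x0 Lfin) (ltry _).
Qed.

Lemma Lambda_up_young_bound n (alpha : R) : (0 < n)%N -> alpha < 0 ->
  (Lambda_up n phi alpha < +oo)%E ->
  forall s x : R, 1 <= s -> 0 < x ->
    phi (x * s) <= 2 ^+ (3 * n) * fine (Lambda_up n phi alpha)
                   * phi x * s `^ (- (n%:R) / alpha).
Proof.
move=> n0 alpha0 Lfin s x s1 x0.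
set L := fine _; set g := - alpha.
have g0 : 0 < g by rewrite oppr_gt0.
have intL := Lambda_up_ubound n alpha x x0 Lfin.
have L0 : 0 <= L.
  rewrite -lee_fin (le_trans _ intL) // young_quotient_integral_ge0 ?ltW // => t.
  by rewrite /= !in_itv /= !andbT; apply: lt_trans.
set r := s `^ g^-1.
have r1 : 1 <= r.
  by rewrite -[leLHS](powRr0 s); apply: ler_powR; rewrite // invr_ge0 ltW.
have r0 : 0 < r := lt_le_trans ltr01 r1.
have sub0 : `]1%R, +oo[ `<=` (`]0, +oo[ : set R).
  by move=> t; rewrite /= !in_itv /= !andbT; apply: lt_trans.
have subr : `]r, 2 * r[ `<=` `]1%R, +oo[.
  by move=> t; rewrite /= !in_itv /= andbT => /andP[rt _]; exact: le_lt_trans rt.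
have rg_x : r `^ g * x = x * s by rewrite powR_invrK ?gt_eqF ?(le_trans ler01) // mulrC.
have := young_quotient_integral_bound n g x r `]1%R, +oo[ L
  (ltW g0) x0 r0 (measurable_itv _) sub0 subr intL.
rewrite rg_x /r powR_invr_exprn => /le_trans; apply.
have -> : - n%:R / alpha = n%:R / g by rewrite /g invrN mulrN mulNr.
rewrite -!mulrA; apply: ler_wpM2r.
  by rewrite mulr_ge0 // mulr_ge0 ?powR_ge0 // young_ge0 // ltW.
by rewrite ler_eXn2l ?ltr1n //; exact: ltn_Pmull.
Qed.

End young_function.

Theorem lemma2p1 (R : realType) (n : nat) (alpha : R) (phi : R -> R) :
  (2 <= n)%N -> - (n%:R) < alpha -> alpha < 0 -> young_function phi ->
  ((Lambda_low n phi alpha < +oo)%E ->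
     forall s x : R, 0 < s -> s <= 1 -> 0 < x ->
       phi (x * s) <= 2 ^+ (2 * n) * fine (Lambda_low n phi alpha)
                      * phi (2 `^ (1 - alpha) * x) * s `^ (n%:R / (1 - alpha)))
  /\
  ((Lambda_up n phi alpha < +oo)%E ->
     (forall x : R, 0 < x ->
        (fun s : R => phi (x * s `^ (- alpha)) / s ^+ n) @ +oo --> (0 : R))
     /\
     (forall s x : R, 1 <= s -> 0 < x ->
        phi (x * s) <= 2 ^+ (3 * n) * fine (Lambda_up n phi alpha)
                       * phi x * s `^ (- (n%:R) / alpha))).
Proof.
move=> n2 _ alpha0 phiY; have n0 : (0 < n)%N := ltnW n2.
split; first exact: Lambda_low_young_bound phi phiY n alpha n0 (lt_trans alpha0 ltr01).
move=> Lfin; split; first exact: Lambda_up_young_cvg0 phi phiY n alpha (ltW alpha0) Lfin.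
exact: Lambda_up_young_bound phi phiY n alpha n0 alpha0 Lfin.
Qed.
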